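(* Let $K$ be a field, $P=K[x_1,\dots,x_n]$, and $\sigma$ a term ordering on $\mathbb{T}^n$. Let $J$ be an ideal in $P$ and let $F$ be a set of non-zero polynomials in $J$. Then: (a) $O_\sigma(J)=O_\sigma(F)$ if and only if $F$ is a $\sigma$-Gröbner basis of $J$; (b) if $F$ is not a $\sigma$-Gröbner basis of $J$, then $O_\sigma(J)\prec_\sigma O_\sigma(F)$.
   Context: $\mathbb{T}^n$ is the monoid of power-products in $x_1,\dots,x_n$. A tuple $(t_1,\dots,t_r)$ of distinct power-products is $\sigma$-ordered if $t_1<_\sigma\cdots<_\sigma t_r$ (the empty tuple is $\sigma$-ordered). The interreduction of a set $T$ of power-products is the set of elements of $T$ not divisible by any other element of $T$. For a set $F$ of non-zero polynomials, $O_\sigma(F)$ is the $\sigma$-ordered tuple of the interreduction of $\{\mathrm{LT}_\sigma(f):f\in F\}$. For an ideal $I$, $O_\sigma(I)$ is the $\sigma$-ordered tuple of the leading terms of a minimal $\sigma$-Gröbner basis of $I$ (equivalently, of the minimal power-product generators of $\mathrm{LT}_\sigma(I)$); it is the empty tuple if $I=0$. For $\sigma$-ordered tuples $T=(t_1,\dots,t_r)$ and $T'=(t'_1,\dots,t'_{r'})$, $T'\prec_\sigma T$ ($T'$ $\sigma$-precedes $T$) means either $T$ is a proper prefix of $T'$ (i.e. $r<r'$ and $t_i=t'_i$ for $i\le r$), or there is $k\le\min(r,r')$ with $t_i=t'_i$ for $i<k$ and $t'_k<_\sigma t_k$. *)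

From HB Require Import structures.
From mathcomp Require Import all_boot all_order all_algebra.
From mathcomp.multinomials Require Import mpoly.
From Stdlib Require Import ClassicalEpsilon.

Set Implicit Arguments.
Unset Strict Implicit.
Unset Printing Implicit Defensive.
Import GRing.Theory.
Local Open Scope ring_scope.

(* Power-products T^n are the monomials 'X_{1..n} (exponent vectors);
   the product of power-products is (m1 + m2)%MM, 1 is 0%MM, and
   divisibility t1 | t2 is the pointwise order (t1 <= t2)%MM. *)

Definition term_ordering (n : nat) (le : rel 'X_{1..n}) : Prop :=
  [/\ reflexive le, antisymmetric le, transitive le, total le &
   ((forall t1 t2 t : 'X_{1..n}, le t1 t2 -> le (t1 + t)%MM (t2 + t)%MM) /\
      (forall t : 'X_{1..n}, le 0%MM t))].

Definition tlt (n : nat) (le : rel 'X_{1..n}) : rel 'X_{1..n} :=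
  fun t1 t2 => (t1 != t2) && le t1 t2.

(* leading term LT_sigma(p): the sigma-largest power-product in the support
   of p (only used for p <> 0). *)
Definition LT (n : nat) (le : rel 'X_{1..n}) (K : fieldType)
    (p : {mpoly K[n]}) : 'X_{1..n} :=
  foldr (fun t acc => if le acc t then t else acc) 0%MM (msupp p).

Definition tdvd (n : nat) (t1 t2 : 'X_{1..n}) : bool := (t1 <= t2)%MM.

Definition is_ideal (n : nat) (K : fieldType) (J : {mpoly K[n]} -> Prop) : Prop :=
  [/\ J 0,
      (forall f g, J f -> J g -> J (f + g)) &
      (forall f g, J g -> J (f * g))].

(* F (a finite set of polynomials, given as a list) is a sigma-Groebner
   basis of J: F is contained in J and LT_sigma(J) is generated by the
   leading terms of the elements of F, i.e. every leading term of a
   non-zero element of J is divisible by the leading term of some element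
   of F. *)
Definition groebner_basis (n : nat) (le : rel 'X_{1..n}) (K : fieldType)
    (J : {mpoly K[n]} -> Prop) (F : seq {mpoly K[n]}) : Prop :=
  (forall f, f \in F -> J f) /\
  (forall f, J f -> f != 0 -> exists2 g, g \in F & tdvd (LT le g) (LT le f)).

Definition sigma_ordered (n : nat) (le : rel 'X_{1..n}) (s : seq 'X_{1..n}) : bool :=
  sorted (tlt le) s.

Definition interreduce (n : nat) (T : seq 'X_{1..n}) : seq 'X_{1..n} :=
  [seq t <- T | all (fun u => (u == t) || ~~ tdvd u t) T].

Definition O_set (n : nat) (le : rel 'X_{1..n}) (K : fieldType)
    (F : seq {mpoly K[n]}) : seq 'X_{1..n} :=
  sort le (undup (interreduce [seq LT le f | f <- F])).

Definition min_gen_LT (n : nat) (le : rel 'X_{1..n}) (K : fieldType)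
    (J : {mpoly K[n]} -> Prop) (t : 'X_{1..n}) : Prop :=
  (exists2 f, J f /\ f != 0 & LT le f = t) /\
  (forall g, J g -> g != 0 -> tdvd (LT le g) t -> LT le g = t).

Definition O_ideal_spec (n : nat) (le : rel 'X_{1..n}) (K : fieldType)
    (J : {mpoly K[n]} -> Prop) (s : seq 'X_{1..n}) : Prop :=
  sigma_ordered le s /\ (forall t, t \in s <-> min_gen_LT le J t).

(* O_sigma(J): the sigma-ordered tuple of the minimal generators of
   LT_sigma(J) (this tuple exists and is unique by Dickson's lemma);
   empty if J = 0. *)
Definition O_ideal (n : nat) (le : rel 'X_{1..n}) (K : fieldType)
    (J : {mpoly K[n]} -> Prop) : seq 'X_{1..n} :=
  epsilon (inhabits [::]) (O_ideal_spec le J).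

Definition precedes (n : nat) (le : rel 'X_{1..n}) (T' T : seq 'X_{1..n}) : Prop :=
  (size T < size T' /\ take (size T) T' = T)%N \/
  (exists k : nat, [/\ (k < size T)%N, (k < size T')%N,
     take k T' = take k T & tlt le (nth 0%MM T' k) (nth 0%MM T k)]).

From mathcomp Require Import all_boot all_order all_algebra.
From mathcomp.multinomials Require Import mpoly.
From Stdlib Require Import Classical ClassicalEpsilon.
Import Order.POrderTheory.

(* O_sigma(J) and O_sigma(F) are both strictly sigma-increasing.  Every entry
   of O_sigma(F) is the leading term of an element of J, hence is divisible by a
   minimal generator of LT_sigma(J), i.e. by an entry of O_sigma(J) (a finite
   tuple by Dickson's lemma), while no entry of O_sigma(F) divides another.  Let
   k be the first position where the tuples differ.  If O_sigma(J) ended there,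
   or had the larger k-th entry, then the divisor in O_sigma(J) of the k-th entry
   of O_sigma(F) would lie in the common prefix, i.e. would be an earlier entry of
   O_sigma(F) dividing it.  So O_sigma(J) precedes O_sigma(F) unless the two are
   equal, and equality says exactly that the leading terms of F generate
   LT_sigma(J). *)

Lemma finite_choice {T U : eqType} (R : T -> U -> Prop) (s : seq T) :
  (forall x, x \in s -> exists y, R x y) ->
  exists t : seq U, (forall y, y \in t -> exists x, R x y) /\
    (forall x, x \in s -> exists2 y, y \in t & R x y).
Proof.
elim: s => [|x s IH] Rs; first by exists [::].
have [y Rxy] := Rs x (mem_head x s).
have [t [tR sR]] := IH (fun z zs => Rs z (mem_behead (s := x :: s) zs)).
exists (y :: t); split=> [z /predU1P[->|/tR//]|z /predU1P[->|/sR[y' y't Rzy']]].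
- by exists x.
- by exists y; rewrite ?mem_head.
- by exists y'; rewrite // inE y't orbT.
Qed.

Lemma finite_pred_enum {T : eqType} (P : T -> Prop) (l : seq T) :
  (forall t, P t -> t \in l) -> exists s, uniq s /\ forall t, t \in s <-> P t.
Proof.
elim: l P => [|x l IH] P Pl.
  by exists [::]; split=> // t; split=> // /Pl.
have [s [us sP]] : exists s, uniq s /\ forall t, t \in s <-> P t /\ t != x.
  by apply: IH => t [/Pl]; rewrite inE => /predU1P[->|]; rewrite ?eqxx.
case: (classic (P x)) => [Px|nPx]; last first.
  exists s; split=> // t; rewrite sP; split=> [[]//|Pt]; split=> //.
  by apply: contra_notN nPx => /eqP <-.
exists (x :: s); split=> [|t].
  by rewrite /= us andbT; apply/negP => /sP[_]; rewrite eqxx.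
rewrite inE; split=> [/predU1P[->//|/sP[]//]|Pt].
by case: (eqVneq t x) => //= tx; apply/sP.
Qed.

Definition covers (B : seq (seq nat)) (S : seq nat -> Prop) : Prop :=
  forall s, S s -> exists2 b, b \in B & all2 leq b s.

Lemma dickson_seq n (S : seq nat -> Prop) :
  (forall s, S s -> size s = n) ->
  exists2 B, (forall b, b \in B -> S b) & covers B S.
Proof.
elim: n S => [|n IH] S HS.
  case: (classic (S [::])) => [S0|nS0].
    exists [:: [::]] => [b /[!inE] /eqP-> //|s Ss].
    by rewrite (size0nil (HS s Ss)); exists [::]; rewrite ?mem_head.
  by exists [::] => // s Ss; case: nS0; rewrite -(size0nil (HS s Ss)).
have sizeS j a : S (j :: a) -> size a = n by move/HS => [].
have [B' B'S B'cov] :=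
  IH (fun a => exists j, S (j :: a)) (fun a '(ex_intro j h) => sizeS j a h).
have [C [CS Ccov]] := finite_choice (fun b c => S c /\ c = head 0 c :: b) B'
  (fun b bB => let: ex_intro j h := B'S b bB in ex_intro _ (j :: b) (conj h erefl)).
have slice j : exists E, (forall e, e \in E -> S e) /\
    covers E (fun s => S s /\ head 0 s = j).
  have [Bj BjS Bjcov] := IH (fun a => S (j :: a)) (sizeS j).
  exists (map (cons j) Bj); split=> [_ /mapP[b /BjS Sb ->] //|s [Ss sj]].
  case: s Ss sj => [/HS//|k a] Ss /= kj; subst k.
  have [b bB ba] := Bjcov a Ss.
  by exists (j :: b); rewrite ?map_f //= leqnn.
(* [C] covers every sequence of [S] whose head is at least [K]; the finitely
   many smaller heads are covered slice by slice. *)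
pose K := \max_(c <- C) head 0 c.
have [D [DS Dcov]] := finite_choice (fun j (E : seq (seq nat)) =>
    (forall e, e \in E -> S e) /\ covers E (fun s => S s /\ head 0 s = j))
  (iota 0 K) (fun j _ => slice j).
exists (C ++ flatten D) => [b|s Ss].
  by rewrite mem_cat => /orP[/CS[? []]|/flattenP[E /DS[j [ES _]] /ES]].
case: (ltnP (head 0 s) K) => [sK|Ks].
  have /Dcov[E ED [_ Ecov]] : head 0 s \in iota 0 K by rewrite mem_iota.
  have [e eE es] := Ecov s (conj Ss erefl).
  by exists e; rewrite // mem_cat; apply/orP; right; apply/flattenP; exists E.
case: s Ss Ks => [/HS//|k a] Ss /= Ks.
have [b bB ba] := B'cov a (ex_intro _ k Ss).
have [c cC [_ ec]] := Ccov b bB.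
exists c; first by rewrite mem_cat cC.
by rewrite ec /= ba andbT (leq_trans _ Ks) // leq_bigmax_seq.
Qed.

Lemma all2_leq_nth (s t : seq nat) i : all2 leq s t -> nth 0 s i <= nth 0 t i.
Proof. by elim: s t i => [|x s IH] [|y t] [|i] //= /andP[xy /IH]. Qed.

Lemma dickson_mnm {n} (P : 'X_{1..n} -> Prop) :
  exists2 B : seq 'X_{1..n}, (forall b, b \in B -> P b) &
    forall m, P m -> exists2 b, b \in B & (b <= m)%MM.
Proof.
pose S (s : seq nat) := exists2 m : 'X_{1..n}, s = m & P m.
have [B BS Bcov] : exists2 B, (forall b, b \in B -> S b) & covers B S.
  by apply: (@dickson_seq n) => _ [m -> _]; rewrite size_tuple.
have [M [MP Mcov]] :=
  finite_choice (fun (b : seq nat) (m : 'X_{1..n}) => b = m :> seq nat /\ P m) B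
    (fun b bB => let: ex_intro2 m bm Pm := BS b bB in ex_intro _ m (conj bm Pm)).
exists M => [m /MP[_ []] //|m Pm].
have [b bB bm] := Bcov m (ex_intro2 _ _ m erefl Pm).
have [m' m'M [bm' _]] := Mcov b bB.
exists m' => //; apply/mnm_lepP => i; rewrite (mnm_nth 0 m') (mnm_nth 0 m) -bm'.
exact: all2_leq_nth.
Qed.

Fixpoint common_prefix_size {T : eqType} (s t : seq T) : nat :=
  if s is x :: s' then
    if t is y :: t' then (if x == y then (common_prefix_size s' t').+1 else 0)
    else 0
  else 0.

Section CommonPrefix.

Context {T : eqType} (x0 : T).
Implicit Types s t : seq T.

Lemma take_common_prefix s t :
  take (common_prefix_size s t) s = take (common_prefix_size s t) t.
Proof. by elim: s t => [|x s IH] [|y t] //=; case: eqP => [->|] //=; rewrite IH. Qed.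

Lemma common_prefix_size_leq s t :
  (common_prefix_size s t <= size s) && (common_prefix_size s t <= size t).
Proof. by elim: s t => [|x s IH] [|y t] //=; case: eqP => //= _; exact: IH. Qed.

Lemma nth_common_prefix_neq s t :
  common_prefix_size s t < size s -> common_prefix_size s t < size t ->
  nth x0 s (common_prefix_size s t) != nth x0 t (common_prefix_size s t).
Proof.
by elim: s t => [|x s IH] [|y t] //=; case: eqP => [_|/eqP//]; exact: IH.
Qed.

Lemma uniq_take_nth {t k y} :
  uniq t -> k < size t -> y \in take k t -> y != nth x0 t k.
Proof.
rewrite -{1}(cat_take_drop k t) cat_uniq => /and3P[_ /hasPn disj _] kt yk.
apply: contraTneq yk => ->; apply: disj.
by rewrite -[X in nth _ _ X]addn0 -nth_drop mem_nth // size_drop subn_gt0.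
Qed.

End CommonPrefix.

Section SortedPrefix.

Context {T : eqType} (x0 : T) {lt dv : rel T}.
Hypotheses (lt_trans : transitive lt) (lt_irr : irreflexive lt).
Hypothesis lt_total : forall a b, a != b -> lt a b || lt b a.
Hypothesis dv_lt : forall a b, dv a b -> (a == b) || lt a b.

Lemma sorted_mem_take s k y :
  sorted lt s -> k < size s -> y \in s -> lt y (nth x0 s k) -> y \in take k s.
Proof.
move=> ss ks ys ysk; rewrite -(nth_index x0 ys).
have iy : index y s < size s by rewrite index_mem.
case: (ltngtP (index y s) k) => [yk|ky|yk].
- by rewrite -(nth_take x0 yk) mem_nth // size_take ks.
- have := sorted_ltn_nth lt_trans x0 ss _ _ ks iy ky.
  by rewrite nth_index // => /(lt_trans _ _ _ ysk); rewrite lt_irr.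
- by move: ysk; rewrite -yk nth_index // lt_irr.
Qed.

Lemma sorted_antichain_precedes s t :
  sorted lt s -> sorted lt t -> s <> t ->
  (forall x, x \in t -> exists2 y, y \in s & dv y x) ->
  (forall x y, x \in t -> y \in t -> dv y x -> y = x) ->
  (size t < size s /\ take (size t) s = t) \/
  (exists k, [/\ k < size t, k < size s,
     take k s = take k t & lt (nth x0 s k) (nth x0 t k)]).
Proof.
move=> ss st neq t_div t_anti.
have ut := sorted_uniq lt_trans lt_irr st.
have /andP[] := common_prefix_size_leq s t.
have := take_common_prefix s t; have := nth_common_prefix_neq x0 s t.
move: (common_prefix_size s t) => k neq_k pre ks kt.
have no_divisor_in_prefix y : k < size t -> y \in take k s -> ~ dv y (nth x0 t k).
  move=> {}kt; rewrite pre => yk ytk; have := uniq_take_nth x0 ut kt yk.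
  by rewrite (t_anti _ _ (mem_nth x0 kt) (mem_take yk) ytk) eqxx.
move: ks kt; rewrite leq_eqVlt => /predU1P[ks|ks]; rewrite leq_eqVlt => /predU1P[kt|kt].
- by case: neq; rewrite -(take_size s) -(take_size t) -ks -kt.
- have [y ys ytk] := t_div _ (mem_nth x0 kt).
  by case: (no_divisor_in_prefix y kt _ ytk); rewrite ks take_size.
- by left; split; rewrite -kt // pre kt take_size.
have [sk_tk|tk_sk] := orP (lt_total _ _ (neq_k ks kt)).
  by right; exists k.
have [y ys ytk] := t_div _ (mem_nth x0 kt).
case: (no_divisor_in_prefix y kt _ ytk); apply: sorted_mem_take => //.
by case/predU1P: (dv_lt _ _ ytk) => [->|y_tk] //; exact: lt_trans y_tk tk_sk.
Qed.

End SortedPrefix.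

Section TermOrdering.

Context {n : nat} {le : rel 'X_{1..n}}.
Hypothesis le_order : term_ordering le.

Lemma tdvd_anti : antisymmetric (@tdvd n).
Proof. by move=> a b /andP[ab ba]; apply/le_anti; rewrite !lem_leo. Qed.

Lemma tdvd_le a b : tdvd a b -> le a b.
Proof.
case: le_order => _ _ _ _ [le_add le0] ab.
by have := le_add 0%MM (b - a)%MM a (le0 _); rewrite add0m submK.
Qed.

Lemma tlt_trans : transitive (tlt le).
Proof.
case: le_order => _ anti tr _ _ y x z /andP[xy le_xy] /andP[yz le_yz].
rewrite /tlt (tr _ _ _ le_xy le_yz) andbT.
by apply: contraNneq xy => xz; apply/eqP/anti; rewrite le_xy xz le_yz.
Qed.

Lemma tlt_irr : irreflexive (tlt le).
Proof. by move=> x; rewrite /tlt eqxx. Qed.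

Lemma tlt_total a b : a != b -> tlt le a b || tlt le b a.
Proof. by case: le_order => _ _ _ tot _ ab; rewrite /tlt ab eq_sym ab tot. Qed.

Lemma tdvd_tlt a b : tdvd a b -> (a == b) || tlt le a b.
Proof. by case: eqVneq => //= ab /tdvd_le; rewrite /tlt ab. Qed.

Lemma sort_tlt_sorted s : uniq s -> sorted (tlt le) (sort le s).
Proof.
case: le_order => _ _ le_tr le_tot _ us.
rewrite sorted_pairwise; last exact: tlt_trans.
rewrite (pairwise_relI (fun x y => x != y) le) -uniq_pairwise sort_uniq us.
by rewrite -sorted_pairwise // sort_sorted.
Qed.

End TermOrdering.

Local Open Scope ring_scope.

Section MinimalGenerators.

Context {K : fieldType} {n : nat} {le : rel 'X_{1..n}}.

Lemma min_gen_LT_dvd (J : {mpoly K[n]} -> Prop) {f} :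
  J f -> f != 0 -> exists2 u, min_gen_LT le J u & tdvd u (LT le f).
Proof.
move=> Jf f0; have : exists2 g, J g /\ g != 0 & LT le g = LT le f by exists f.
(* Induction along the degree-lexicographic order of mpoly, which refines
   divisibility. *)
move: (LT le f); apply: ltmwf => t IH LTt; apply: NNPP => no_u.
apply: (no_u); exists t; last exact: lepm_refl.
split=> // g Jg g0 gt; apply: NNPP => /eqP gt_neq.
have lt_gt : (LT le g < t)%O by rewrite lt_def eq_sym gt_neq lem_leo.
have [u u_min ug] := IH _ lt_gt (ex_intro2 _ _ g (conj Jg g0) erefl).
by case: no_u; exists u; last exact: lepm_trans ug gt.
Qed.

Lemma min_gen_LT_eq (J G : {mpoly K[n]} -> Prop) :
  (forall g, G g -> J g) ->
  (forall f, J f -> f != 0 -> exists2 g, G g /\ g != 0 & tdvd (LT le g) (LT le f)) ->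
  forall t, min_gen_LT le J t <-> min_gen_LT le G t.
Proof.
move=> GJ G_gen t; split=> [[[f [Jf f0] <-] f_min]|[[g [Gg g0] <-] g_min]].
- have [g [Gg g0] gf] := G_gen f Jf f0.
  have gf_eq := f_min g (GJ g Gg) g0 gf.
  split=> [|h Gh h0 hf]; first by exists g.
  exact: f_min (GJ h Gh) h0 hf.
- split=> [|h Jh h0 hg]; first by exists g; split=> //; exact: GJ.
  have [g' [Gg' g'0] g'h] := G_gen h Jh h0.
  have g'g := g_min g' Gg' g'0 (lepm_trans g'h hg).
  apply: tdvd_anti; apply/andP; split; first exact: hg.
  by rewrite -g'g.
Qed.

Lemma mem_O_set {F : seq {mpoly K[n]}} :
  (forall f, f \in F -> f != 0) ->
  forall t, t \in O_set le F <-> min_gen_LT le (fun f => f \in F) t.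
Proof.
move=> F0 t; rewrite mem_sort mem_undup mem_filter; split.
- case/andP => /allP t_min /mapP[g gF tg]; subst t.
  split=> [|h hF _ hg]; first by exists g; rewrite ?F0.
  by have := t_min _ (map_f _ hF); rewrite /= hg orbF => /eqP.
- case=> [[g [gF _] <-] g_min]; rewrite map_f // andbT.
  apply/allP => _ /mapP[h hF ->]; case hg: (tdvd _ _); last by rewrite orbT.
  by rewrite (g_min h hF (F0 h hF) hg) eqxx.
Qed.

Hypothesis le_order : term_ordering le.

Lemma O_set_sorted (F : seq {mpoly K[n]}) : sorted (tlt le) (O_set le F).
Proof. by apply: sort_tlt_sorted; rewrite ?undup_uniq. Qed.

Lemma O_idealP (J : {mpoly K[n]} -> Prop) : O_ideal_spec le J (O_ideal le J).
Proof.
apply: epsilon_spec.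
have [B BLT Bcov] := dickson_mnm (fun m => exists2 f, J f /\ f != 0 & LT le f = m).
have [s [us sJ]] : exists s, uniq s /\ forall t, t \in s <-> min_gen_LT le J t.
  apply: (finite_pred_enum _ B) => t [LTt t_min].
  have [b bB bt] := Bcov t LTt; have [f [Jf f0] fb] := BLT b bB.
  by rewrite -(t_min f Jf f0) fb.
by exists (sort le s); split=> [|t]; rewrite ?mem_sort; [exact: sort_tlt_sorted|].
Qed.

End MinimalGenerators.

Section GroebnerCriterion.

Variables (K : fieldType) (n : nat) (le : rel 'X_{1..n}).
Variables (J : {mpoly K[n]} -> Prop) (F : seq {mpoly K[n]}).
Hypothesis le_order : term_ordering le.
Hypothesis F_J : forall f, f \in F -> J f /\ f != 0.

Let F_nz f : f \in F -> f != 0. Proof. by case/F_J. Qed.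

Lemma O_ideal_eq_O_setP : O_ideal le J = O_set le F <-> groebner_basis le J F.
Proof.
have [J_sorted memJ] := O_idealP le_order J.
split=> [JF|[_ F_gen]].
  split=> [f /F_J[] //|f Jf f0].
  have [u u_min uf] := min_gen_LT_dvd (le := le) J Jf f0.
  move/memJ: u_min uf; rewrite JF => /(mem_O_set F_nz) [[g [gF _] <-] _] gf.
  by exists g.
have JF_eq := min_gen_LT_eq J (fun f => f \in F) (fun g gF => (F_J g gF).1)
  (fun f Jf f0 => let: ex_intro2 g gF gf := F_gen f Jf f0 in
                  ex_intro2 _ _ g (conj gF (F_nz g gF)) gf).
apply: (irr_sorted_eq (tlt_trans le_order) (@tlt_irr _ le)) => // [|t].
  exact: O_set_sorted.
apply/idP/idP => [/memJ/JF_eq/(mem_O_set F_nz)|/(mem_O_set F_nz)/JF_eq/memJ] //.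
Qed.

Lemma O_ideal_precedes_O_set :
  ~ groebner_basis le J F -> precedes le (O_ideal le J) (O_set le F).
Proof.
move=> notGB; have [J_sorted memJ] := O_idealP le_order J.
apply: (sorted_antichain_precedes 0%MM (tlt_trans le_order) (@tlt_irr _ le)
  (tlt_total le_order) (tdvd_tlt le_order)) => //.
- exact: O_set_sorted.
- by move/O_ideal_eq_O_setP.
- move=> t /(mem_O_set F_nz) [[g [gF _] <-] _]; have [Jg g0] := F_J g gF.
  have [u u_min ug] := min_gen_LT_dvd (le := le) J Jg g0.
  by exists u; first exact/memJ.
- move=> t u /(mem_O_set F_nz) [_ t_min] /(mem_O_set F_nz) [[g [gF _] <-] _].
  exact: t_min gF (F_nz g gF).
Qed.

End GroebnerCriterion.

Theorem proposition4p6 (K : fieldType) (n : nat) (le : rel 'X_{1..n})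
    (J : {mpoly K[n]} -> Prop) (F : seq {mpoly K[n]}) :
  term_ordering le -> is_ideal J ->
  (forall f, f \in F -> J f /\ f != 0) ->
  (O_ideal le J = O_set le F <-> groebner_basis le J F) /\
  (~ groebner_basis le J F -> precedes le (O_ideal le J) (O_set le F)).
Proof.
(* Only leading terms of elements of J enter, so J need not be an ideal. *)
move=> le_order _ F_J.
by split; [exact: O_ideal_eq_O_setP | exact: O_ideal_precedes_O_set].
Qed.
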